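(* Let $G$ be a countable infinite discrete group and $\alpha: G\curvearrowright X$ a continuous action on an infinite compact Hausdorff space $X$ with weak paradoxical comparison. Let $F\subset X$ be closed and $O\subset X$ open, and suppose that for every closed $G$-invariant subset $Y\subset X$, $F\cap Y\neq\emptyset$ implies $O\cap Y\neq\emptyset$. Then $F\prec O$.
   Context: Subequivalence: for closed $F$ and open $O$, $F\prec O$ if there exist a finite open cover $\mathcal{U}$ of $F$ and $s_U\in G$ with the sets $s_UU$ pairwise disjoint subsets of $O$. Weak paradoxical comparison: for every closed $F$ and nonempty open $O$ with $F\subset G\cdot O=\bigcup_{g\in G}gO$, one has $F\prec O$. *)

From HB Require Import structures.
From mathcomp Require Import all_boot all_order all_algebra.
From mathcomp Require Import all_classical all_reals all_analysis.
Set Implicit Arguments. Unset Strict Implicit. Unset Printing Implicit Defensive.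
Local Open Scope classical_set_scope.

Definition is_group (G : Type) (mul : G -> G -> G) (e : G) (inv : G -> G) : Prop :=
  [/\ forall a b c, mul a (mul b c) = mul (mul a b) c,
      forall a, mul e a = a,
      forall a, mul a e = a,
      forall a, mul (inv a) a = e &
      forall a, mul a (inv a) = e].

(* A continuous action of the discrete group G on the space X:
   act e = id, act (g h) = act g o act h, and each act g continuous
   (for discrete G this is joint continuity of G x X -> X). *)
Definition is_cont_action (G : Type) (X : topologicalType)
  (mul : G -> G -> G) (e : G) (act : G -> X -> X) : Prop :=
  [/\ forall x, act e x = x,
      forall g h x, act (mul g h) x = act g (act h x) &
      forall g, continuous (act g)].

Definition subequiv (G : Type) (X : topologicalType) (act : G -> X -> X)
  (F O : set X) : Prop :=
  exists (n : nat) (U : 'I_n -> set X) (s : 'I_n -> G),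
    [/\ forall i, open (U i),
        F `<=` \bigcup_(i in [set: 'I_n]) U i,
        forall i, act (s i) @` U i `<=` O &
        forall i j, i <> j -> act (s i) @` U i `&` act (s j) @` U j = set0].

Definition orbit_set (G : Type) (X : Type) (act : G -> X -> X) (O : set X) : set X :=
  \bigcup_(g in [set: G]) act g @` O.

Definition weak_paradoxical_comparison (G : Type) (X : topologicalType)
  (act : G -> X -> X) : Prop :=
  forall F O : set X, closed F -> open O -> O !=set0 ->
    F `<=` orbit_set act O -> subequiv act F O.

Definition invariant_set (G : Type) (X : Type) (act : G -> X -> X) (Y : set X) : Prop :=
  forall g, act g @` Y `<=` Y.

From HB Require Import structures.
From mathcomp Require Import all_boot all_order all_algebra.
From mathcomp Require Import all_classical all_reals all_analysis.
Set Implicit Arguments. Unset Strict Implicit. Unset Printing Implicit Defensive.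
Local Open Scope classical_set_scope.

(* The complement Y of the saturation G.O is closed (G.O is open, every
   [act g] being a homeomorphism) and G-invariant, and it misses O; so by
   hypothesis F misses Y, i.e. F is contained in G.O.  If O is nonempty,
   weak paradoxical comparison gives F ≺ O; if O is empty, so are G.O and
   F, and the empty cover witnesses F ≺ O. *)

Lemma orbit_set0 (G X : Type) (act : G -> X -> X) : orbit_set act set0 = set0.
Proof. by apply/seteqP; split=> // x [g _]; rewrite image_set0. Qed.

Lemma subequiv_set0 (G : Type) (X : topologicalType) (act : G -> X -> X)
  (O : set X) : subequiv act set0 O.
Proof.
exists 0%N, (fun=> set0), (fun i : 'I_0 => False_rect G (notF (ltn_ord i))).
by split=> [[]|//|[]|[]].
Qed.

Section GroupAction.
Variables (G : Type) (mul : G -> G -> G) (e : G) (inv : G -> G).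
Variables (X : topologicalType) (act : G -> X -> X).
Hypotheses (grp : is_group mul e inv) (cact : is_cont_action mul e act).

Lemma act_invK g : cancel (act g) (act (inv g)).
Proof.
case: grp => _ _ _ mulVg _; case: cact => act1 actM _.
by move=> x; rewrite -actM mulVg act1.
Qed.

Lemma act_Kinv g : cancel (act (inv g)) (act g).
Proof.
case: grp => _ _ _ _ mulgV; case: cact => act1 actM _.
by move=> x; rewrite -actM mulgV act1.
Qed.

Lemma image_act_preimage g (A : set X) : act g @` A = act (inv g) @^-1` A.
Proof.
apply/seteqP; split=> [_ [y Ay <-]|y Ay]; first by rewrite /preimage /= act_invK.
by exists (act (inv g) y); rewrite ?act_Kinv.
Qed.

Lemma open_orbit_set (A : set X) : open A -> open (orbit_set act A).
Proof.
move=> oA; apply: bigcup_open => g _; rewrite image_act_preimage.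
by case: cact => _ _ act_cont; apply: open_comp => // x _; apply: act_cont.
Qed.

Lemma invariant_setC_orbit (A : set X) : invariant_set act (~` orbit_set act A).
Proof.
move=> g _ [y nGAy <-] [h _ [z Az hz]]; apply: nGAy.
exists (mul (inv g) h) => //; exists z => //.
by case: cact => _ actM _; rewrite actM hz act_invK.
Qed.

Lemma sub_orbit_set_of_invariant_meet (F O : set X) : open O ->
  (forall Y : set X, closed Y -> invariant_set act Y ->
     F `&` Y !=set0 -> O `&` Y !=set0) ->
  F `<=` orbit_set act O.
Proof.
move=> oO meetO x Fx; apply: contrapT => nGOx.
have [y [Oy nGOy]] : O `&` ~` orbit_set act O !=set0.
  apply: meetO; last by exists x.
  - exact/open_closedC/open_orbit_set.
  - exact: invariant_setC_orbit.
by apply: nGOy; exists e => //; exists y => //; case: cact.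
Qed.

End GroupAction.

Theorem lemma4p10 (G : Type) (mul : G -> G -> G) (e : G) (inv : G -> G)
  (X : topologicalType) (act : G -> X -> X) :
  is_group mul e inv ->
  countable [set: G] -> ~ finite_set [set: G] ->
  compact [set: X] -> hausdorff_space X -> ~ finite_set [set: X] ->
  is_cont_action mul e act ->
  weak_paradoxical_comparison act ->
  forall F O : set X, closed F -> open O ->
  (forall Y : set X, closed Y -> invariant_set act Y ->
     F `&` Y !=set0 -> O `&` Y !=set0) ->
  subequiv act F O.
Proof.
move=> grp _ _ _ _ _ cact wpc F O cF oO meetO.
have FGO := sub_orbit_set_of_invariant_meet grp cact oO meetO.
have [nonempty_O|/nonemptyPn O0] := pselect (O !=set0); first exact: wpc.
suff -> : F = set0 by apply: subequiv_set0.
by rewrite -subset0 -(orbit_set0 act) -O0.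
Qed.
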